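(* Let $\mathbb{F}$ be an algebraically closed field of characteristic $0$, $D$ an $\mathbb{F}$-vector space with $\dim D=3$, and $\Gamma\subseteq D^{\ast}$ an additive subgroup with $\Gamma\simeq\mathbb{Z}^3$ and $\bigcap_{\alpha\in\Gamma}\ker\alpha=\{0\}$. Let $M=\bigoplus_{\theta\in\Gamma}M_\theta$ be a $\Gamma$-graded $\mathcal{S}(\Gamma,D)$-module with $\dim M_\theta=1$, $M_\theta=\mathbb{F}w_\theta$. Let $\sigma,\rho\in\Gamma$ be $\mathbb{Z}$-linearly independent, let $\tilde\partial_1$ be a nonzero vector of the one-dimensional space $\ker\sigma\cap\ker\rho$, $\tilde\partial_2\in\ker\sigma\setminus\mathbb{F}\tilde\partial_1$ and $\tilde\partial_3\in\ker\rho\setminus\mathbb{F}\tilde\partial_1$. Suppose that for some $\nu\in\Gamma$, $x^{-\sigma}\tilde\partial_1.x^{\sigma}\tilde\partial_1.w_\nu\neq0$ and $x^{-\rho}\tilde\partial_1.x^{\rho}\tilde\partial_1.w_\nu\neq0$. Let $a_1,b_1$ be any nonzero scalars with $x^{-\sigma}\tilde\partial_1.x^{\sigma}\tilde\partial_1.w_\nu=a_1^2w_\nu$ and $x^{-\rho}\tilde\partial_1.x^{\rho}\tilde\partial_1.w_\nu=b_1^2w_\nu$. Then there exist nonzero $v_{\nu+i\sigma+k\rho}\in M_{\nu+i\sigma+k\rho}$ ($i,k\in\mathbb{Z}$) such that $x^{\pm\sigma}\tilde\partial_1.v_{\nu+i\sigma+k\rho}=a_1v_{\nu+(i\pm1)\sigma+k\rho}$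 and $x^{\pm\rho}\tilde\partial_1.v_{\nu+i\sigma+k\rho}=b_1v_{\nu+i\sigma+(k\pm1)\rho}$ for all $i,k\in\mathbb{Z}$. Moreover, for any such family, writing $x^{\sigma}\tilde\partial_2.v_\nu=a_2v_{\nu+\sigma}$, $x^{\rho}\tilde\partial_3.v_\nu=a_3v_{\nu+\rho}$ and $x^{\sigma+\rho}\tilde\partial_1.v_\nu=dv_{\nu+\sigma+\rho}$, one has for all $i,k\in\mathbb{Z}$: $x^{\sigma+\rho}\tilde\partial_1.v_{\nu+i\sigma+k\rho}=dv_{\nu+(i+1)\sigma+(k+1)\rho}$, $x^{\pm\sigma}\tilde\partial_2.v_{\nu+i\sigma+k\rho}=\big(a_2+k\rho(\tilde\partial_2)\tfrac{d}{b_1}\big)v_{\nu+(i\pm1)\sigma+k\rho}$, $x^{\pm\rho}\tilde\partial_3.v_{\nu+i\sigma+k\rho}=\big(a_3+i\sigma(\tilde\partial_3)\tfrac{d}{a_1}\big)v_{\nu+i\sigma+(k\pm1)\rho}$, and $a_1^2=b_1^2=d^2$.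
   Context: $\mathcal{S}(\Gamma,D)$ is the Lie algebra spanned by $x^\alpha\partial$ with $\alpha\in\Gamma\setminus\{0\}$, $\partial\in\ker\alpha$ (linear in $\partial$), with bracket $[x^\alpha\partial_1,x^\beta\partial_2]=x^{\alpha+\beta}(\beta(\partial_1)\partial_2-\alpha(\partial_2)\partial_1)$. A $\Gamma$-graded module satisfies $x^\alpha\partial.M_\theta\subseteq M_{\alpha+\theta}$. *)

From HB Require Import structures.
From mathcomp Require Import all_boot all_order all_algebra.
Set Implicit Arguments. Unset Strict Implicit. Unset Printing Implicit Defensive.
Import Order.TTheory GRing.Theory Num.Theory.
Local Open Scope ring_scope.

(* D = F^3, realised as row vectors 'rV[F]_3 (any 3-dim space is isomorphic).
   Gamma ~ Z^3 is realised through coordinates: an element of Gamma is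
   n : 'rV[int]_3, and it denotes the functional
      pair E n : D -> F,  pair E n d = \sum_i n_i * (d *m E)_i,
   i.e. n_1 g_1 + n_2 g_2 + n_3 g_3 where g_i (the i-th column of E) are
   three Z-linearly independent generators of Gamma in D^*. *)

Definition pair (F : fieldType) (E : 'M[F]_3) (a : 'rV[int]_3) (d : 'rV[F]_3) : F :=
  \sum_(i < 3) (a 0 i)%:~R * (d *m E) 0 i.

(* The columns of E are Z-linearly independent (so Gamma = sum Z g_i ~ Z^3). *)
Definition Zindep_gens (F : fieldType) (E : 'M[F]_3) : Prop :=
  forall c : 'rV[int]_3, (forall d : 'rV[F]_3, pair E c d = 0) -> c = 0.

Definition separating (F : fieldType) (E : 'M[F]_3) : Prop :=
  forall d : 'rV[F]_3, (forall a : 'rV[int]_3, pair E a d = 0) -> d = 0.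

Definition homog (F : fieldType) (M : lmodType F) (w : 'rV[int]_3 -> M)
  (theta : 'rV[int]_3) (m : M) : Prop := exists c : F, m = c *: w theta.

(* [act a d m] is the action  x^a d . m  of the generator x^a d
   (a in Gamma \ {0}, d in ker a) of S(Gamma, D) on m in M. *)
Definition graded_S_module (F : fieldType) (E : 'M[F]_3) (M : lmodType F)
  (w : 'rV[int]_3 -> M) (act : 'rV[int]_3 -> 'rV[F]_3 -> M -> M) : Prop :=
  (
   (forall a (d1 d2 : 'rV[F]_3) (c : F) (m : M), a != 0 ->
      pair E a d1 = 0 -> pair E a d2 = 0 ->
      act a (c *: d1 + d2) m = c *: act a d1 m + act a d2 m) /\
   (forall a (d : 'rV[F]_3) (c : F) (m1 m2 : M),
      act a d (c *: m1 + m2) = c *: act a d m1 + act a d m2) /\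
   (* representation of the bracket
      [x^a d1, x^b d2] = x^(a+b) (b(d1) d2 - a(d2) d1)  (which is 0 if a+b=0) *)
   (forall a b (d1 d2 : 'rV[F]_3) (m : M), a != 0 -> b != 0 ->
      pair E a d1 = 0 -> pair E b d2 = 0 ->
      act a d1 (act b d2 m) - act b d2 (act a d1 m) =
        (if a + b == 0 then 0
         else act (a + b) (pair E b d1 *: d2 - pair E a d2 *: d1) m)) /\
   (forall a (d : 'rV[F]_3) theta, a != 0 -> pair E a d = 0 ->
      homog w (a + theta) (act a d (w theta))) /\
   (forall theta, w theta != 0) /\
   (forall (s : seq 'rV[int]_3) (c : 'rV[int]_3 -> F), uniq s ->
      \sum_(t <- s) c t *: w t = 0 -> forall t, t \in s -> c t = 0) /\
   (forall m : M, exists (s : seq 'rV[int]_3) (c : 'rV[int]_3 -> F),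
      m = \sum_(t <- s) c t *: w t)).

Definition gidx (nu sigma rho : 'rV[int]_3) (i k : int) : 'rV[int]_3 :=
  nu + sigma *~ i + rho *~ k.

Definition good_family (F : fieldType) (M : lmodType F) (w : 'rV[int]_3 -> M)
  (act : 'rV[int]_3 -> 'rV[F]_3 -> M -> M) (nu sigma rho : 'rV[int]_3)
  (d1 : 'rV[F]_3) (a1 b1 : F) (v : int -> int -> M) : Prop :=
  forall i k : int,
  [/\ v i k != 0 /\ homog w (gidx nu sigma rho i k) (v i k),
      act sigma d1 (v i k) = a1 *: v (i + 1) k,
      act (- sigma) d1 (v i k) = a1 *: v (i - 1) k,
      act rho d1 (v i k) = b1 *: v i (k + 1) &
      act (- rho) d1 (v i k) = b1 *: v i (k - 1)].

(* All operators x^a d1 with a in Z sigma + Z rho commute, so normalised powers of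
   x^(+-sigma) d1 and x^(+-rho) d1 applied to w_nu give the family v.  Every x^a e with
   a = p sigma + q rho maps v_(i,k) to a multiple c_(i,k) v_(i+p,k+q), and bracketing with
   x^(+-sigma) d1, x^(+-rho) d1 turns the relations of S(Gamma, D) into first-order
   difference equations for c, whose solutions are affine in i and k.  Computing the
   coefficient of x^(rho-sigma) d1 through its brackets with x^(-sigma) d2 and x^rho d3
   gives b1^2 = d^2; bracketing x^(-sigma) d2 with [x^rho d3, x^sigma d2] fixes its
   constant term.  Exchanging sigma and rho gives the statements for d3, and
   rho(d2) <> 0 <> sigma(d3) because ker sigma /\ ker rho is the line F d1. *)

From HB Require Import structures.
From mathcomp Require Import all_boot all_order all_algebra.
From mathcomp Require Import ring zify.
Import GRing.Theory.
Set Implicit Arguments. Unset Strict Implicit. Unset Printing Implicit Defensive.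
Local Open Scope ring_scope.

Section Pairing.
Variables (F : fieldType) (E : 'M[F]_3).

Lemma pairD a b d : pair E (a + b) d = pair E a d + pair E b d.
Proof. by rewrite /pair -big_split; apply: eq_bigr => i _; rewrite mxE intrD mulrDl. Qed.

Lemma pairN a d : pair E (- a) d = - pair E a d.
Proof. by rewrite /pair -sumrN; apply: eq_bigr => i _; rewrite mxE intrN mulNr. Qed.

Lemma pairDr a d d' : pair E a (d + d') = pair E a d + pair E a d'.
Proof. by rewrite /pair -big_split; apply: eq_bigr => i _; rewrite mulmxDl mxE mulrDr. Qed.

Lemma pairZr a c d : pair E a (c *: d) = c * pair E a d.
Proof.
rewrite /pair big_distrr; apply: eq_bigr => i _.
by rewrite -scalemxAl mxE mulrCA.
Qed.

Lemma pairBr a d d' : pair E a (d - d') = pair E a d - pair E a d'.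
Proof. by rewrite -scaleN1r pairDr pairZr mulN1r. Qed.

Lemma pair0r a : pair E a 0 = 0.
Proof. by rewrite -(scale0r 0) pairZr mul0r. Qed.

End Pairing.

Lemma mxzE (R : zmodType) m n (A : 'M[R]_(m, n)) z i j : (A *~ z) i j = A i j *~ z.
Proof.
have mxnE k : (A *+ k) i j = A i j *+ k.
  by elim: k => [|k IH]; rewrite ?mulr0n ?mxE // !mulrS mxE IH.
by case: z => k; rewrite ?NegzE ?mulrNz ?mxE -!pmulrn mxnE.
Qed.

Lemma Zindep_neq0 n (s r : 'rV[int]_n) :
  (forall p q : int, s *~ p + r *~ q = 0 -> p = 0 /\ q = 0) -> s != 0 /\ r != 0.
Proof.
move=> indep; split; apply/eqP => z.
  by have /indep[] // : s *~ 1 + r *~ 0 = 0 by rewrite z mul0rz mulr0z addr0.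
by have /indep[] // : s *~ 0 + r *~ 1 = 0 by rewrite z mul0rz mulr0z add0r.
Qed.

Lemma Zindep_minor n (s r : 'rV[int]_n) :
  (forall p q : int, s *~ p + r *~ q = 0 -> p = 0 /\ q = 0) ->
  exists i j, s 0 i * r 0 j != s 0 j * r 0 i.
Proof.
move=> indep.
have [/existsP[i /existsP[j minor_ij]]|] :=
  boolP [exists i, exists j, s 0 i * r 0 j != s 0 j * r 0 i]; first by exists i, j.
rewrite negb_exists => /forallP no_minor.
have minor0 i j : s 0 i * r 0 j = s 0 j * r 0 i.
  by move: (no_minor i); rewrite negb_exists => /forallP/(_ j); rewrite negbK => /eqP.
have [j sj] : exists j, s 0 j != 0.
  have [s_neq0 _] := Zindep_neq0 indep.
  apply/existsP; apply: contraNT s_neq0; rewrite negb_exists => /forallP s0.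
  by apply/eqP/matrixP => a l; rewrite ord1 mxE; apply/eqP; move: (s0 l); rewrite negbK.
suff /indep[_ /eqP] : s *~ r 0 j + r *~ (- s 0 j) = 0 by rewrite oppr_eq0 (negbTE sj).
apply/matrixP => a l; rewrite ord1 !mxE !mxzE !mulrzz mulrN.
by rewrite minor0 [r 0 l * _]mulrC subrr.
Qed.

Lemma pchar0_intr_eq0 (R : idomainType) (z : int) :
  [pchar R] =i pred0 -> (z%:~R == 0 :> R) = (z == 0).
Proof.
move=> /pcharf0P R0; case: z => n; first by rewrite -pmulrn R0.
by rewrite NegzE rmorphN /= !oppr_eq0 -pmulrn R0.
Qed.

Lemma row_free_of_minor (F : fieldType) n (s r : 'rV[F]_n) i j :
  s 0 i * r 0 j != s 0 j * r 0 i ->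
  row_free (\matrix_(k < 2, l < n) (if k == 0 then s else r) 0 l).
Proof.
move=> minor; apply/row_freePn => -[k] /sub_rVP[c /matrixP rowk].
have := rowk 0 i; have := rowk 0 j; rewrite !mxE.
case: k {rowk} => [[|[|//]] _] /= hj hi; move/eqP: minor; apply; rewrite hi hj; ring.
Qed.

Lemma corank1_ker_line (F : fieldType) m n (A : 'M[F]_(m, n)) (x e : 'rV_n) :
  (\rank A).+1 = n -> x *m A^T = 0 -> e *m A^T = 0 -> e != 0 ->
  exists c, x = c *: e.
Proof.
move=> rkA xA eA e_neq0.
have eK : (e <= kermx A^T)%MS by apply/sub_kermxP.
have Ke : (kermx A^T <= e)%MS.
  by rewrite -(geq_leqif (mxrank_leqif_sup eK)) mxrank_ker mxrank_tr rank_rV e_neq0; lia.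
by apply/sub_rVP; apply: submx_trans Ke; apply/sub_kermxP.
Qed.

Lemma separating_mulmx_eq0 (F : fieldType) (E : 'M[F]_3) (x : 'rV_3) :
  separating E -> x *m E = 0 -> x = 0.
Proof. by move=> sepE xE; apply: sepE => a; rewrite /pair xE big1 // => i _; rewrite mxE mulr0. Qed.

Lemma pair_kerI_line (F : fieldType) (E : 'M[F]_3) sigma rho d1 d :
  [pchar F] =i pred0 -> separating E ->
  (forall p q : int, sigma *~ p + rho *~ q = 0 -> p = 0 /\ q = 0) ->
  d1 != 0 -> pair E sigma d1 = 0 -> pair E rho d1 = 0 ->
  pair E sigma d = 0 -> pair E rho d = 0 -> exists c, d = c *: d1.
Proof.
move=> F0 sepE indep d1_neq0 sd1 rd1 sd rd.
pose A : 'M[F]_(2, 3) :=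
  \matrix_(k, l) (if k == 0 then map_mx intr sigma else map_mx intr rho) 0 l.
have rkA : (\rank A).+1 = 3.
  have [i [j minor]] := Zindep_minor indep.
  suff /eqP -> : row_free A by [].
  apply: (row_free_of_minor (i := i) (j := j)); rewrite !mxE -!intrM.
  by rewrite -subr_eq0 -intrB pchar0_intr_eq0 // subr_eq0.
have kerA x : pair E sigma x = 0 -> pair E rho x = 0 -> (x *m E) *m A^T = 0.
  move=> sx rx; apply/matrixP => a k; rewrite ord1 [LHS]mxE [RHS]mxE.
  transitivity (pair E (if k == 0 then sigma else rho) x); last by case: ifP.
  by apply: eq_bigr => l _; rewrite !mxE mulrC; case: ifP; rewrite mxE.
have d1E_neq0 : d1 *m E != 0.
  by apply: contra d1_neq0 => /eqP/(separating_mulmx_eq0 sepE) ->.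
have [c dE] := corank1_ker_line rkA (kerA d sd rd) (kerA d1 sd1 rd1) d1E_neq0.
exists c; apply/eqP; rewrite -subr_eq0; apply/eqP/(separating_mulmx_eq0 sepE).
by rewrite mulmxBl -scalemxAl dE subrr.
Qed.

Section Ladder.
Variables (F : fieldType) (M : lmodType F) (X Y : M -> M) (a : F).
Hypotheses (XZ : scalable X) (YZ : scalable Y)
  (XY : forall m, X (Y m) = Y (X m)) (a_neq0 : a != 0).

Definition ladder (i : int) (m : M) : M :=
  match i with
  | Posz n => (a ^+ n)^-1 *: iter n X m
  | Negz n => (a ^+ n.+1)^-1 *: iter n.+1 Y m
  end.

Lemma iterZ (Z : M -> M) : scalable Z -> forall n c m, iter n Z (c *: m) = c *: iter n Z m.
Proof. by move=> ZZ n c m; elim: n => //= n ->; rewrite ZZ. Qed.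

Lemma iter_comm (Z O : M -> M) : (forall m, O (Z m) = Z (O m)) ->
  forall n m, O (iter n Z m) = iter n Z (O m).
Proof. by move=> OZ n m; elim: n => //= n <-; rewrite OZ. Qed.

Lemma ladderZ i c m : ladder i (c *: m) = c *: ladder i m.
Proof. by case: i => n; rewrite /= ?(iterZ XZ) ?(iterZ YZ) ?YZ !scalerA mulrC. Qed.

Lemma ladder_comm (O : M -> M) i m : scalable O ->
  (forall m, O (X m) = X (O m)) -> (forall m, O (Y m) = Y (O m)) ->
  O (ladder i m) = ladder i (O m).
Proof. by move=> OZ OX OY; case: i => n; rewrite /= OZ ?OY ?(iter_comm OX) ?(iter_comm OY). Qed.

Section Rung.
Variable m : M.
Hypothesis XYm : X (Y m) = a ^+ 2 *: m.

Lemma XY_iter n : X (Y (iter n Y m)) = a ^+ 2 *: iter n Y m.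
Proof. by rewrite -iterS iterSr (iter_comm XY) XYm (iterZ YZ). Qed.

Lemma YX_iter n : Y (X (iter n X m)) = a ^+ 2 *: iter n X m.
Proof.
by rewrite -iterS iterSr (iter_comm (fun m => esym (XY m))) -XY XYm (iterZ XZ).
Qed.

Lemma ladder_up i : X (ladder i m) = a *: ladder (i + 1) m.
Proof.
case: i => [n|[|n]].
- rewrite /= XZ scalerA addn1 /=; congr (_ *: _).
  by rewrite exprS invfM mulrA mulfV // mul1r.
- by rewrite /= XZ XYm scalerA subnn expr0 invr1 scale1r expr1 expr2 mulKf.
- have -> : Negz n.+1 + 1 = Negz n by rewrite !NegzE; lia.
  rewrite /= XZ -[Y (iter n Y m)]/(iter n.+1 Y m) XY_iter /= !scalerA.
  by congr (_ *: _); rewrite !exprS; field; rewrite a_neq0 expf_neq0.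
Qed.

Lemma ladder_down i : Y (ladder i m) = a *: ladder (i - 1) m.
Proof.
case: i => [[|n]|n].
- by rewrite /= YZ scalerA subnn expr0 invr1 scale1r expr1 mulfV // scale1r.
- have -> : Posz n.+1 - 1 = Posz n by lia.
  rewrite /= YZ -[X (iter n X m)]/(iter n.+1 X m) YX_iter /= !scalerA.
  by congr (_ *: _); rewrite !exprS; field; rewrite a_neq0 expf_neq0.
- have -> : Negz n - 1 = Negz n.+1 by rewrite !NegzE; lia.
  rewrite /= YZ scalerA; congr (_ *: _).
  by rewrite !exprS; field; rewrite a_neq0 expf_neq0.
Qed.

Lemma ladder_neq0 i : m != 0 -> ladder i m != 0.
Proof.
move=> m_neq0; apply: contraNneq m_neq0 => ladder_i0.
have X0 : X 0 = 0 by have := XZ 0 0; rewrite !scale0r.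
have Y0 : Y 0 = 0 by have := YZ 0 0; rewrite !scale0r.
have scale_a0 (u : M) : 0 = a *: u -> u = 0.
  by move=> /esym/eqP; rewrite scaler_eq0 (negbTE a_neq0) => /eqP.
have ladder0 j : ladder (i + j) m = 0.
  elim/int_rec: j => [|n IH|n IH]; first by rewrite addr0.
  - have -> : i + n.+1 = i + n + 1 by lia.
    by apply: scale_a0; rewrite -ladder_up IH.
  - have -> : i - n.+1%:Z = i - n%:Z - 1 by lia.
    by apply: scale_a0; rewrite -ladder_down IH.
by have := ladder0 (- i); rewrite addrN /= expr0 invr1 scale1r => ->.
Qed.

End Rung.
End Ladder.

Section Grid.
Variables (F : fieldType) (M : lmodType F) (X Y X' Y' : M -> M) (a b : F) (m : M).
Hypotheses (XZ : scalable X) (YZ : scalable Y) (X'Z : scalable X') (Y'Z : scalable Y')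
  (XY : forall m, X (Y m) = Y (X m)) (X'Y' : forall m, X' (Y' m) = Y' (X' m))
  (XX' : forall m, X (X' m) = X' (X m)) (XY' : forall m, X (Y' m) = Y' (X m))
  (YX' : forall m, Y (X' m) = X' (Y m)) (YY' : forall m, Y (Y' m) = Y' (Y m))
  (a_neq0 : a != 0) (b_neq0 : b != 0) (m_neq0 : m != 0)
  (XYm : X (Y m) = a ^+ 2 *: m) (X'Y'm : X' (Y' m) = b ^+ 2 *: m).

Definition grid i k := ladder X Y a i (ladder X' Y' b k m).

Lemma grid_rungs i k :
  [/\ grid i k != 0, X (grid i k) = a *: grid (i + 1) k, Y (grid i k) = a *: grid (i - 1) k,
      X' (grid i k) = b *: grid i (k + 1) & Y' (grid i k) = b *: grid i (k - 1)].
Proof.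
have XYu : X (Y (ladder X' Y' b k m)) = a ^+ 2 *: ladder X' Y' b k m.
  rewrite (ladder_comm b k m (O := fun m => X (Y m))) => [|c u|u|u].
  - by rewrite XYm ladderZ.
  - by rewrite YZ XZ.
  - by rewrite YX' XX'.
  - by rewrite YY' XY'.
have comm_XY (O : M -> M) : scalable O ->
    (forall u, O (X u) = X (O u)) -> (forall u, O (Y u) = Y (O u)) ->
    O (grid i k) = ladder X Y a i (O (ladder X' Y' b k m)).
  by move=> OZ OX OY; rewrite /grid ladder_comm.
split.
- exact/(ladder_neq0 XZ YZ XY a_neq0 XYu)/(ladder_neq0 X'Z Y'Z X'Y' b_neq0 X'Y'm).
- exact: (ladder_up XZ YZ XY a_neq0 XYu).
- exact: (ladder_down XZ YZ XY a_neq0 XYu).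
- rewrite (comm_XY X' X'Z (fun u => esym (XX' u)) (fun u => esym (YX' u))).
  by rewrite (ladder_up X'Z Y'Z X'Y' b_neq0 X'Y'm) ladderZ.
- rewrite (comm_XY Y' Y'Z (fun u => esym (XY' u)) (fun u => esym (YY' u))).
  by rewrite (ladder_down X'Z Y'Z X'Y' b_neq0 X'Y'm) ladderZ.
Qed.

End Grid.

Lemma scalevI (F : fieldType) (V : lmodType F) (u : V) s t :
  u != 0 -> s *: u = t *: u -> s = t.
Proof.
move=> u_neq0 /eqP; rewrite -subr_eq0 -scalerBl scaler_eq0 (negbTE u_neq0) orbF.
by rewrite subr_eq0 => /eqP.
Qed.

Lemma eq_addr_div (F : fieldType) (g x y z : F) : g != 0 -> g * (x - y) = z -> x = y + z / g.
Proof. by move=> g_neq0 <-; rewrite mulrC mulKf // addrC subrK. Qed.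

Lemma mulr_div_sqr (F : fieldType) (x y c : F) : x != 0 -> y != 0 -> x ^+ 2 = y ^+ 2 ->
  c * x / y = c * y / x.
Proof.
move=> x_neq0 y_neq0 xy; apply/eqP; rewrite -subr_eq0.
have -> : c * x / y - c * y / x = c * (x ^+ 2 - y ^+ 2) / (x * y) by field; rewrite x_neq0 y_neq0.
by rewrite xy subrr mulr0 mul0r.
Qed.

Lemma int_affine (R : comPzRingType) (f : int -> R) (s : R) :
  (forall i, f (i + 1) = f i + s) -> forall i, f i = f 0 + i%:~R * s.
Proof.
move=> f_step; elim/int_rec => [|n IH|n IH]; first by rewrite mul0r addr0.
- by rewrite intS addrC f_step IH intrD mulrDl mul1r addrA.
- have := f_step (- n.+1%:Z); have -> : - n.+1%:Z + 1 = - n%:Z by lia.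
  by rewrite IH => /eqP; rewrite -subr_eq => /eqP <-; rewrite !intrN intS intrD; ring.
Qed.

Lemma int2_affine (R : comPzRingType) (f : int -> int -> R) (s t : R) :
  (forall i k, f (i + 1) k = f i k + s) -> (forall i k, f i (k + 1) = f i k + t) ->
  forall i k, f i k = f 0 0 + i%:~R * s + k%:~R * t.
Proof.
move=> f_stepi f_stepk i k.
by rewrite (int_affine (f_stepi^~ k)) (int_affine (f_stepk 0)) addrAC.
Qed.

Lemma gidx_shift (nu sigma rho : 'rV[int]_3) p q i k :
  sigma *~ p + rho *~ q + gidx nu sigma rho i k = gidx nu sigma rho (i + p) (k + q).
Proof. by apply/matrixP => x y; rewrite /gidx !mxE !mxzE !mulrzz; ring. Qed.

Lemma good_family_swap (F : fieldType) (M : lmodType F) w act nu sigma rho d1 a1 b1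
    (v : int -> int -> M) :
  good_family w act nu sigma rho d1 a1 b1 v ->
  good_family w act nu rho sigma d1 b1 a1 (fun i k => v k i).
Proof.
move=> vF i k; have [[v_neq0 v_homog] ? ? ? ?] := vF k i.
by split=> //; split=> //; rewrite /gidx addrAC.
Qed.

Section GradedModule.
Variables (F : fieldType) (E : 'M[F]_3) (M : lmodType F) (w : 'rV[int]_3 -> M)
  (act : 'rV[int]_3 -> 'rV[F]_3 -> M -> M).
Hypothesis G : graded_S_module E w act.

Lemma actZ a d c m : act a d (c *: m) = c *: act a d m.
Proof.
case: G => _ [lin_m _].
have act0 : act a d 0 = 0.
  have := lin_m a d 1 0 0; rewrite scale1r !addr0 scale1r => /eqP.
  by rewrite -subr_eq subrr eq_sym => /eqP.
by rewrite -[c *: m]addr0 lin_m act0 !addr0.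
Qed.

Lemma act0d a m : a != 0 -> act a 0 m = 0.
Proof.
case: G => lin_d _ a_neq0; have := lin_d a 0 0 1 m a_neq0 (pair0r E a) (pair0r E a).
by rewrite scale1r addr0 scale1r => /eqP; rewrite -subr_eq subrr eq_sym => /eqP.
Qed.

Lemma actZd a c d m : a != 0 -> pair E a d = 0 -> act a (c *: d) m = c *: act a d m.
Proof.
case: G => lin_d _ a_neq0 ad; have := lin_d a d 0 c m a_neq0 ad (pair0r E a).
by rewrite !addr0 act0d // addr0.
Qed.

Lemma act_bracket a b d d' m : a != 0 -> b != 0 -> a + b != 0 ->
  pair E a d = 0 -> pair E b d' = 0 ->
  act a d (act b d' m) - act b d' (act a d m) =
    act (a + b) (pair E b d *: d' - pair E a d' *: d) m.
Proof.
by case: G => _ [_ [bracket _]] *; rewrite bracket // ifN.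
Qed.

Lemma act_bracket_ker a b d d' m : a != 0 -> b != 0 -> a + b != 0 ->
  pair E a d = 0 -> pair E b d = 0 -> pair E b d' = 0 ->
  act a d (act b d' m) - act b d' (act a d m) = - pair E a d' *: act (a + b) d m.
Proof.
move=> a_neq0 b_neq0 ab_neq0 ad bd bd'.
by rewrite act_bracket // bd scale0r sub0r -scaleNr actZd // pairD ad bd addr0.
Qed.

Lemma act_comm a b d d' m : a != 0 -> b != 0 ->
  pair E a d = 0 -> pair E b d = 0 -> pair E a d' = 0 -> pair E b d' = 0 ->
  act a d (act b d' m) = act b d' (act a d m).
Proof.
case: G => _ [_ [bracket _]] a_neq0 b_neq0 ad bd ad' bd'; apply/eqP; rewrite -subr_eq0.
rewrite bracket // bd ad' !scale0r subrr; case: ifP => // /negbT ab_neq0.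
by rewrite act0d.
Qed.

Lemma homog_line theta m u : homog w theta m -> homog w theta u -> u != 0 ->
  exists c, m = c *: u.
Proof.
move=> [c ->] [c' u_def] u_neq0.
have c'_neq0 : c' != 0 by apply: contra u_neq0; rewrite u_def => /eqP ->; rewrite scale0r.
by exists (c / c'); rewrite u_def scalerA divfK.
Qed.

Lemma homogZ theta c m : homog w theta m -> homog w theta (c *: m).
Proof. by case=> c' ->; exists (c * c'); rewrite scalerA. Qed.

Lemma homog_act a d theta m : a != 0 -> pair E a d = 0 ->
  homog w theta m -> homog w (a + theta) (act a d m).
Proof.
case: G => _ [_ [_ [graded _]]] a_neq0 ad [c ->].
by rewrite actZ; apply/homogZ/graded.
Qed.

Lemma homog_iter (Z : M -> M) s theta m (n : nat) :
  (forall theta m, homog w theta m -> homog w (s + theta) (Z m)) ->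
  homog w theta m -> homog w (theta + s *~ n) (iter n Z m).
Proof.
move=> hZ hm; elim: n => [|n IH]; first by rewrite mulr0z addr0.
by rewrite intS mulrzDr mulr1z addrCA; apply: hZ.
Qed.

Lemma homog_ladder (X Y : M -> M) a s theta m i :
  (forall theta m, homog w theta m -> homog w (s + theta) (X m)) ->
  (forall theta m, homog w theta m -> homog w (- s + theta) (Y m)) ->
  homog w theta m -> homog w (theta + s *~ i) (ladder X Y a i m).
Proof.
move=> hX hY hm; case: i => n; apply: homogZ; first exact: homog_iter.
by rewrite NegzE mulrNz -mulNrz; apply: homog_iter.
Qed.

Lemma good_family_exists sigma rho nu d1 a1 b1 :
  sigma != 0 -> rho != 0 -> pair E sigma d1 = 0 -> pair E rho d1 = 0 ->
  a1 != 0 -> b1 != 0 ->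
  act (- sigma) d1 (act sigma d1 (w nu)) = a1 ^+ 2 *: w nu ->
  act (- rho) d1 (act rho d1 (w nu)) = b1 ^+ 2 *: w nu ->
  exists v, good_family w act nu sigma rho d1 a1 b1 v.
Proof.
move=> s_neq0 r_neq0 sd1 rd1 a1_neq0 b1_neq0 YXw WZw.
have ms_neq0 : - sigma != 0 by rewrite oppr_eq0.
have mr_neq0 : - rho != 0 by rewrite oppr_eq0.
have msd1 : pair E (- sigma) d1 = 0 by rewrite pairN sd1 oppr0.
have mrd1 : pair E (- rho) d1 = 0 by rewrite pairN rd1 oppr0.
have comm a b : a != 0 -> b != 0 -> pair E a d1 = 0 -> pair E b d1 = 0 ->
    forall m, act a d1 (act b d1 m) = act b d1 (act a d1 m).
  by move=> *; apply: act_comm.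
have w_neq0 : w nu != 0 by case: G => _ [_ [_ [_ [w_neq0 _]]]].
have XYw : act sigma d1 (act (- sigma) d1 (w nu)) = a1 ^+ 2 *: w nu by rewrite comm.
have ZWw : act rho d1 (act (- rho) d1 (w nu)) = b1 ^+ 2 *: w nu by rewrite comm.
have rungs := grid_rungs (actZ _ _) (actZ _ _) (actZ _ _) (actZ _ _)
  (comm _ _ s_neq0 ms_neq0 sd1 msd1) (comm _ _ r_neq0 mr_neq0 rd1 mrd1)
  (comm _ _ s_neq0 r_neq0 sd1 rd1) (comm _ _ s_neq0 mr_neq0 sd1 mrd1)
  (comm _ _ ms_neq0 r_neq0 msd1 rd1) (comm _ _ ms_neq0 mr_neq0 msd1 mrd1)
  a1_neq0 b1_neq0 w_neq0 XYw ZWw.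
exists (grid (act sigma d1) (act (- sigma) d1) (act rho d1) (act (- rho) d1) a1 b1 (w nu)).
move=> i k; have [v_neq0 Xv Yv Zv Wv] := rungs i k; do 2!split=> //.
rewrite /gidx addrAC; apply: homog_ladder => [th m|th m|]; try exact: homog_act.
apply: homog_ladder => [th m|th m|]; try exact: homog_act.
by exists 1; rewrite scale1r.
Qed.

Definition shifts (v : int -> int -> M) (a : 'rV[int]_3) (e : 'rV[F]_3) (p q : int)
    (c : int -> int -> F) : Prop :=
  forall i k, act a e (v i k) = c i k *: v (i + p) (k + q).

Section ShiftedFamily.
Variables (sigma rho nu : 'rV[int]_3) (d1 : 'rV[F]_3) (a1 b1 : F) (v : int -> int -> M).
Hypotheses (indep : forall p q : int, sigma *~ p + rho *~ q = 0 -> p = 0 /\ q = 0)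
  (sigma_d1 : pair E sigma d1 = 0) (rho_d1 : pair E rho d1 = 0)
  (a1_neq0 : a1 != 0) (b1_neq0 : b1 != 0)
  (vF : good_family w act nu sigma rho d1 a1 b1 v).

Local Notation shifts := (shifts v).

Let lattice_neq0 p q : (p != 0) || (q != 0) -> sigma *~ p + rho *~ q != 0.
Proof. by apply: contraTneq => /indep[-> ->]. Qed.

Let sigma_neq0 : sigma != 0. Proof. by have [] := Zindep_neq0 indep. Qed.

Let rho_neq0 : rho != 0. Proof. by have [] := Zindep_neq0 indep. Qed.

Let sigma_rho_neq0 : sigma + rho != 0.
Proof. by have := @lattice_neq0 1 1 isT; rewrite !mulr1z. Qed.

Let msigma_neq0 : - sigma != 0.
Proof. by rewrite oppr_eq0. Qed.

Let msigma_d1 : pair E (- sigma) d1 = 0.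
Proof. by rewrite pairN sigma_d1 oppr0. Qed.

Let v_neq0 i k : v i k != 0.
Proof. by case: (vF i k) => [[]]. Qed.

Lemma shifts_exists a e p q : a = sigma *~ p + rho *~ q -> a != 0 -> pair E a e = 0 ->
  exists c, shifts a e p q c.
Proof.
move=> a_def a_neq0 ae.
have coef i k : exists c, act a e (v i k) == c *: v (i + p) (k + q).
  have [[_ v_homog] _ _ _ _] := vF i k; have [[_ v'_homog] _ _ _ _] := vF (i + p) (k + q).
  have := homog_act a_neq0 ae v_homog; rewrite a_def gidx_shift => homog_av.
  by have [c ->] := homog_line homog_av v'_homog (v_neq0 _ _); exists c.
by exists (fun i k => xchoose (coef i k)) => i k; apply/eqP/(xchooseP (coef i k)).
Qed.

Lemma shifts_commutator a b e f p q s t c c' : shifts a e p q c -> shifts b f s t c' ->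
  forall i k, act b f (act a e (v i k)) - act a e (act b f (v i k)) =
    (c i k * c' (i + p) (k + q) - c' i k * c (i + s) (k + t)) *: v (i + p + s) (k + q + t).
Proof.
move=> ae bf i k.
by rewrite ae actZ bf bf actZ ae !scalerA scalerBl (addrAC i s p) (addrAC k t q).
Qed.

Lemma shifts_bracket a b e f p q s t c c' : shifts a e p q c -> shifts b f s t c' ->
  a != 0 -> b != 0 -> b + a != 0 -> pair E a e = 0 -> pair E b f = 0 ->
  shifts (b + a) (pair E a f *: e - pair E b e *: f) (p + s) (q + t)
    (fun i k => c i k * c' (i + p) (k + q) - c' i k * c (i + s) (k + t)).
Proof.
move=> ae bf a_neq0 b_neq0 ba_neq0 ae0 bf0 i k.
by rewrite -act_bracket // (shifts_commutator ae bf) !addrA.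
Qed.

Lemma shifts_sigma_d1 : shifts sigma d1 1 0 (fun _ _ => a1).
Proof. by move=> i k; rewrite addr0; case: (vF i k). Qed.

Lemma shifts_msigma_d1 : shifts (- sigma) d1 (-1) 0 (fun _ _ => a1).
Proof. by move=> i k; rewrite addr0; case: (vF i k). Qed.

Lemma shifts_rho_d1 : shifts rho d1 0 1 (fun _ _ => b1).
Proof. by move=> i k; rewrite addr0; case: (vF i k). Qed.

Lemma shifts_d1_invariant a e p q c b s t g : shifts a e p q c ->
  shifts b d1 s t (fun _ _ => g) -> g != 0 -> a != 0 -> b != 0 ->
  pair E a d1 = 0 -> pair E b d1 = 0 -> pair E a e = 0 -> pair E b e = 0 ->
  forall i k, c (i + s) (k + t) = c i k.
Proof.
move=> ae bd1 g_neq0 a_neq0 b_neq0 ad1 bd1' ae0 be0 i k.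
have := shifts_commutator ae bd1 i k; rewrite act_comm // subrr => /esym/eqP.
rewrite scaler_eq0 (negbTE (v_neq0 _ _)) orbF mulrC subr_eq0 => /eqP.
by move/(mulfI g_neq0).
Qed.

Lemma shifts_d1_step a e p q c b s t g h : shifts a e p q c ->
  shifts b d1 s t (fun _ _ => g) -> shifts (b + a) d1 (p + s) (q + t) (fun _ _ => h) ->
  a != 0 -> b != 0 -> b + a != 0 ->
  pair E a d1 = 0 -> pair E b d1 = 0 -> pair E a e = 0 ->
  forall i k, g * (c (i + s) (k + t) - c i k) = pair E b e * h.
Proof.
move=> ae bd1 bad1 a_neq0 b_neq0 ba_neq0 ad1 bd1' ae0 i k.
have := shifts_commutator ae bd1 i k; rewrite act_bracket_ker // bad1 !addrA.
rewrite scalerA => /(scalevI (v_neq0 _ _)) commE.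
by rewrite mulrBr [g * c i k]mulrC -opprB -commE mulNr opprK.
Qed.

Lemma shifts_d1_const a p q : a = sigma *~ p + rho *~ q -> a != 0 -> pair E a d1 = 0 ->
  exists h, shifts a d1 p q (fun _ _ => h).
Proof.
move=> a_def a_neq0 ad1; have [c ac] := shifts_exists a_def a_neq0 ad1.
have ci i k : c (i + 1) k = c i k + 0.
  rewrite addr0 -[k in LHS]addr0.
  exact: (shifts_d1_invariant ac shifts_sigma_d1 a1_neq0 a_neq0 sigma_neq0 ad1 sigma_d1
           ad1 sigma_d1 i k).
have ck i k : c i (k + 1) = c i k + 0.
  rewrite addr0 -[i in LHS]addr0.
  exact: (shifts_d1_invariant ac shifts_rho_d1 b1_neq0 a_neq0 rho_neq0 ad1 rho_d1 ad1 rho_d1 i k).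
by exists (c 0 0) => i k; rewrite ac (int2_affine ci ck) !mulr0 !addr0.
Qed.

Lemma shifts_sigma_rho_d1 d : act (sigma + rho) d1 (v 0 0) = d *: v 1 1 ->
  shifts (sigma + rho) d1 1 1 (fun _ _ => d).
Proof.
move=> Tv00; have [|||h Th] := shifts_d1_const (p := 1) (q := 1) (a := sigma + rho).
- by rewrite !mulr1z.
- exact: sigma_rho_neq0.
- by rewrite pairD sigma_d1 rho_d1 addr0.
suff <- : h = d by [].
by apply: (scalevI (v_neq0 1 1)); rewrite -Tv00 Th.
Qed.

Lemma shifts_sigma_d2 d2 a2 d : pair E sigma d2 = 0 ->
  act sigma d2 (v 0 0) = a2 *: v 1 0 -> shifts (sigma + rho) d1 1 1 (fun _ _ => d) ->
  shifts sigma d2 1 0 (fun _ k => a2 + k%:~R * (pair E rho d2 * d / b1)).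
Proof.
move=> sd2 Av00 Td.
have [|c Ac] := shifts_exists (p := 1) (q := 0) _ sigma_neq0 sd2.
  by rewrite mulr1z mulr0z addr0.
have ci i k : c (i + 1) k = c i k + 0.
  rewrite addr0 -[k in LHS]addr0.
  exact: (shifts_d1_invariant Ac shifts_sigma_d1 a1_neq0 sigma_neq0 sigma_neq0 sigma_d1
           sigma_d1 sd2 sd2 i k).
have ck i k : c i (k + 1) = c i k + pair E rho d2 * d / b1.
  apply: eq_addr_div b1_neq0 _; rewrite -[X in c X (k + 1)]addr0.
  apply: (shifts_d1_step Ac shifts_rho_d1) => //; last by rewrite addrC.
  by rewrite [rho + _]addrC addr0 add0r.
have c00 : c 0 0 = a2 by apply: (scalevI (v_neq0 1 0)); rewrite -Av00 Ac.
by move=> i k; rewrite Ac (int2_affine ci ck) mulr0 addr0 c00.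
Qed.

Lemma shifts_msigma_d2 d2 d : pair E sigma d2 = 0 -> pair E rho d2 != 0 ->
  shifts (sigma + rho) d1 1 1 (fun _ _ => d) ->
  d != 0 /\
  exists al, shifts (- sigma) d2 (-1) 0 (fun _ k => al + k%:~R * (pair E rho d2 * b1 / d)).
Proof.
move=> sd2 rd2 Td; have msd2 : pair E (- sigma) d2 = 0 by rewrite pairN sd2 oppr0.
have [|c Ac] := shifts_exists (p := -1) (q := 0) _ msigma_neq0 msd2.
  by rewrite mulrN1z mulr0z addr0.
have ci i k : c (i + 1) k = c i k.
  rewrite -[k in LHS]addr0.
  exact: (shifts_d1_invariant Ac shifts_sigma_d1 a1_neq0 msigma_neq0 sigma_neq0 msigma_d1
           sigma_d1 msd2 sd2 i k).
have dstep i k : d * (c i (k + 1) - c i k) = pair E rho d2 * b1.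
  rewrite -(ci i (k + 1)) -(add0r (pair E rho d2)) -sd2 -pairD.
  have srs : sigma + rho - sigma = rho by rewrite addrAC subrr add0r.
  apply: (shifts_d1_step Ac Td); rewrite ?srs //; first exact: shifts_rho_d1.
  by rewrite pairD sigma_d1 rho_d1 addr0.
have d_neq0 : d != 0.
  apply/eqP => d0; move: (dstep 0 0); rewrite d0 mul0r => /esym/eqP.
  by rewrite mulf_eq0 (negbTE rd2) (negbTE b1_neq0).
split=> //; exists (c 0 0) => i k; rewrite Ac.
have ck j l : c j (l + 1) = c j l + pair E rho d2 * b1 / d by apply: eq_addr_div.
by rewrite (int2_affine (fun j l => etrans (ci j l) (esym (addr0 _))) ck) mulr0 addr0.
Qed.

Lemma b1_sqr d2 d3 a3 al d : pair E sigma d2 = 0 -> pair E rho d2 != 0 ->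
  pair E rho d3 = 0 -> pair E sigma d3 != 0 -> d != 0 ->
  shifts (- sigma) d2 (-1) 0 (fun _ k => al + k%:~R * (pair E rho d2 * b1 / d)) ->
  shifts rho d3 0 1 (fun i _ => a3 + i%:~R * (pair E sigma d3 * d / a1)) ->
  b1 ^+ 2 = d ^+ 2.
Proof.
move=> sd2 rd2 rd3 sd3 d_neq0 A'c Bc.
have msd2 : pair E (- sigma) d2 = 0 by rewrite pairN sd2 oppr0.
have rms_neq0 : rho - sigma != 0.
  by have := @lattice_neq0 (-1) 1 isT; rewrite mulrN1z mulr1z addrC.
have rmsd1 : pair E (rho - sigma) d1 = 0 by rewrite pairD rho_d1 msigma_d1 addr0.
have [|u Uc] := shifts_d1_const (p := -1) (q := 1) _ rms_neq0 rmsd1.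
  by rewrite mulrN1z mulr1z addrC.
have u_b1 : u = b1 ^+ 2 / d.
  apply: (mulfI rd2).
  rewrite -(shifts_d1_step A'c shifts_rho_d1 Uc msigma_neq0 rho_neq0 rms_neq0 msigma_d1
              rho_d1 msd2 0 0).
  by field.
have u_d : u = d.
  have msd3 : - pair E sigma d3 != 0 by rewrite oppr_eq0.
  have Uc' : shifts (- sigma + rho) d1 (-1) 1 (fun _ _ => u) by rewrite addrC.
  have msr_neq0 : - sigma + rho != 0 by rewrite addrC.
  apply: (mulfI msd3); rewrite -pairN.
  rewrite -(shifts_d1_step Bc shifts_msigma_d1 Uc' rho_neq0 msigma_neq0 msr_neq0 rho_d1
              msigma_d1 rd3 0 0).
  by rewrite pairN; field.
by rewrite -(divfK d_neq0 (b1 ^+ 2)) -u_b1 u_d expr2.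
Qed.

Lemma msigma_d2_coef0 d2 d3 a2 a3 al d : pair E sigma d2 = 0 -> pair E rho d2 != 0 ->
  pair E rho d3 = 0 -> pair E sigma d3 != 0 -> d != 0 -> b1 ^+ 2 = d ^+ 2 ->
  shifts sigma d2 1 0 (fun _ k => a2 + k%:~R * (pair E rho d2 * d / b1)) ->
  shifts (- sigma) d2 (-1) 0 (fun _ k => al + k%:~R * (pair E rho d2 * b1 / d)) ->
  shifts rho d3 0 1 (fun i _ => a3 + i%:~R * (pair E sigma d3 * d / a1)) ->
  al = a2.
Proof.
move=> sd2 rd2 rd3 sd3 d_neq0 b1d Ac A'c Bc.
have rs_neq0 : rho + sigma != 0 by rewrite addrC.
(* [x^(rho+sigma) d23] is the bracket [x^rho d3, x^sigma d2], and its bracket with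
   x^(-sigma) d2 is - rho(d2)^2 x^rho d3. *)
have Pc := shifts_bracket Ac Bc sigma_neq0 rho_neq0 rs_neq0 sd2 rd3.
set d23 := pair E sigma d3 *: d2 - pair E rho d2 *: d3 in Pc.
have rsd23 : pair E (rho + sigma) d23 = 0.
  by rewrite pairD !pairBr !pairZr sd2 rd3; ring.
have msd2 : pair E (- sigma) d2 = 0 by rewrite pairN sd2 oppr0.
have msrs : - sigma + (rho + sigma) = rho by rewrite addrC addrK.
have msrs_neq0 : - sigma + (rho + sigma) != 0 by rewrite msrs.
have vecE : pair E (rho + sigma) d2 *: d23 - pair E (- sigma) d23 *: d2 =
    (- pair E rho d2 ^+ 2) *: d3.
  by rewrite pairD pairN /d23 !pairBr !pairZr sd2; apply/rowP => j; rewrite !mxE; ring.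
have := shifts_bracket Pc A'c rs_neq0 msigma_neq0 msrs_neq0 rsd23 msd2 0 0.
rewrite msrs vecE actZd // Bc scalerA => /(scalevI (v_neq0 0 1)) coefE.
have alpha2 : (pair E rho d2 * d / b1) ^+ 2 = pair E rho d2 ^+ 2.
  by rewrite expr_div_n exprMn -b1d mulfK // expf_neq0.
rewrite (mulr_div_sqr _ b1_neq0 d_neq0 b1d) -alpha2 in coefE.
set alpha := pair E rho d2 * d / b1 in coefE; set beta := pair E sigma d3 * d / a1 in coefE.
have : alpha * beta * (al - a2) = 0.
  move/eqP: coefE; rewrite -subr_eq0 => /eqP <-; ring.
have ab_neq0 : alpha * beta != 0 by rewrite !mulf_neq0 ?invr_neq0.
by move/eqP; rewrite mulf_eq0 (negbTE ab_neq0) subr_eq0 => /eqP.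
Qed.

End ShiftedFamily.

End GradedModule.

Lemma good_family_coefficients (F : fieldType) (E : 'M[F]_3) (M : lmodType F)
    (w : 'rV[int]_3 -> M) (act : 'rV[int]_3 -> 'rV[F]_3 -> M -> M)
    (sigma rho nu : 'rV[int]_3) (d1 d2 d3 : 'rV[F]_3) (a1 b1 a2 a3 d : F)
    (v : int -> int -> M) :
  graded_S_module E w act ->
  (forall p q : int, sigma *~ p + rho *~ q = 0 -> p = 0 /\ q = 0) ->
  pair E sigma d1 = 0 -> pair E rho d1 = 0 ->
  pair E sigma d2 = 0 -> pair E rho d2 != 0 -> pair E rho d3 = 0 -> pair E sigma d3 != 0 ->
  a1 != 0 -> b1 != 0 -> good_family w act nu sigma rho d1 a1 b1 v ->
  act sigma d2 (v 0 0) = a2 *: v 1 0 -> act rho d3 (v 0 0) = a3 *: v 0 1 ->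
  act (sigma + rho) d1 (v 0 0) = d *: v 1 1 ->
  [/\ forall i k : int,
        [/\ act (sigma + rho) d1 (v i k) = d *: v (i + 1) (k + 1),
            act sigma d2 (v i k) = (a2 + k%:~R * pair E rho d2 * d / b1) *: v (i + 1) k,
            act (- sigma) d2 (v i k) = (a2 + k%:~R * pair E rho d2 * d / b1) *: v (i - 1) k,
            act rho d3 (v i k) = (a3 + i%:~R * pair E sigma d3 * d / a1) *: v i (k + 1) &
            act (- rho) d3 (v i k) = (a3 + i%:~R * pair E sigma d3 * d / a1) *: v i (k - 1)],
      a1 ^+ 2 = d ^+ 2 &
      b1 ^+ 2 = d ^+ 2].
Proof.
move=> G indep sd1 rd1 sd2 rd2 rd3 sd3 a1_neq0 b1_neq0 vF Av00 Bv00 Tv00.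
have indep' p q : rho *~ p + sigma *~ q = 0 -> p = 0 /\ q = 0.
  by rewrite addrC => /indep[].
(* Primed facts are about the transposed family, with sigma and rho exchanged. *)
have vF' := good_family_swap vF.
have Tc := shifts_sigma_rho_d1 G indep sd1 rd1 a1_neq0 b1_neq0 vF Tv00.
have Tc' : shifts act (fun i k => v k i) (rho + sigma) d1 1 1 (fun _ _ => d).
  by move=> i k; rewrite [rho + _]addrC Tc.
have Ac := shifts_sigma_d2 G indep sd1 rd1 a1_neq0 b1_neq0 vF sd2 Av00 Tc.
have Bc' := shifts_sigma_d2 G indep' rd1 sd1 b1_neq0 a1_neq0 vF' rd3 Bv00 Tc'.
have [d_neq0 [al A'c]] := shifts_msigma_d2 G indep sd1 rd1 a1_neq0 b1_neq0 vF sd2 rd2 Tc.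
have [_ [be B'c']] := shifts_msigma_d2 G indep' rd1 sd1 b1_neq0 a1_neq0 vF' rd3 sd3 Tc'.
have Bc : shifts act v rho d3 0 1 (fun i _ => a3 + i%:~R * (pair E sigma d3 * d / a1)).
  by move=> i k; apply: Bc'.
have B'c : shifts act v (- rho) d3 0 (-1) (fun i _ => be + i%:~R * (pair E sigma d3 * a1 / d)).
  by move=> i k; apply: B'c'.
have Ac' : shifts act (fun i k => v k i) sigma d2 0 1
    (fun i _ => a2 + i%:~R * (pair E rho d2 * d / b1)).
  by move=> i k; apply: Ac.
have b1d := b1_sqr G indep sd1 rd1 a1_neq0 b1_neq0 vF sd2 rd2 rd3 sd3 d_neq0 A'c Bc.
have a1d := b1_sqr G indep' rd1 sd1 b1_neq0 a1_neq0 vF' rd3 sd3 sd2 rd2 d_neq0 B'c' Ac'.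
have al_a2 := msigma_d2_coef0 G indep a1_neq0 b1_neq0 vF sd2 rd2 rd3 sd3 d_neq0 b1d Ac A'c Bc.
have be_a3 :=
  msigma_d2_coef0 G indep' b1_neq0 a1_neq0 vF' rd3 sd3 sd2 rd2 d_neq0 a1d Bc' B'c' Ac'.
split=> // i k; split.
- exact: Tc.
- by rewrite Ac addr0 !mulrA.
- by rewrite A'c addr0 al_a2 (mulr_div_sqr _ b1_neq0 d_neq0 b1d) !mulrA.
- by rewrite Bc addr0 !mulrA.
- by rewrite B'c addr0 be_a3 (mulr_div_sqr _ a1_neq0 d_neq0 a1d) !mulrA.
Qed.

Theorem lemma3p2 (F : closedFieldType) (E : 'M[F]_3) (M : lmodType F)
  (w : 'rV[int]_3 -> M) (act : 'rV[int]_3 -> 'rV[F]_3 -> M -> M)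
  (sigma rho nu : 'rV[int]_3) (d1 d2 d3 : 'rV[F]_3) (a1 b1 : F) :
  [pchar F] =i pred0 ->
  Zindep_gens E -> separating E ->
  graded_S_module E w act ->
  (forall p q : int, sigma *~ p + rho *~ q = 0 -> p = 0 /\ q = 0) ->
  d1 != 0 -> pair E sigma d1 = 0 -> pair E rho d1 = 0 ->
  pair E sigma d2 = 0 -> ~ (exists c : F, d2 = c *: d1) ->
  pair E rho d3 = 0 -> ~ (exists c : F, d3 = c *: d1) ->
  a1 != 0 -> b1 != 0 ->
  act (- sigma) d1 (act sigma d1 (w nu)) = a1 ^+ 2 *: w nu ->
  act (- rho) d1 (act rho d1 (w nu)) = b1 ^+ 2 *: w nu ->
  (exists v : int -> int -> M, good_family w act nu sigma rho d1 a1 b1 v) /\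
  (forall (v : int -> int -> M) (a2 a3 d : F),
     good_family w act nu sigma rho d1 a1 b1 v ->
     act sigma d2 (v 0 0) = a2 *: v 1 0 ->
     act rho d3 (v 0 0) = a3 *: v 0 1 ->
     act (sigma + rho) d1 (v 0 0) = d *: v 1 1 ->
     [/\ forall i k : int,
           [/\ act (sigma + rho) d1 (v i k) = d *: v (i + 1) (k + 1),
               act sigma d2 (v i k)
                 = (a2 + k%:~R * pair E rho d2 * d / b1) *: v (i + 1) k,
               act (- sigma) d2 (v i k)
                 = (a2 + k%:~R * pair E rho d2 * d / b1) *: v (i - 1) k,
               act rho d3 (v i k)
                 = (a3 + i%:~R * pair E sigma d3 * d / a1) *: v i (k + 1) &
               act (- rho) d3 (v i k)
                 = (a3 + i%:~R * pair E sigma d3 * d / a1) *: v i (k - 1)],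
         a1 ^+ 2 = d ^+ 2 &
         b1 ^+ 2 = d ^+ 2]).
Proof.
move=> F0 _ sepE G indep d1_neq0 sd1 rd1 sd2 d2_line rd3 d3_line a1_neq0 b1_neq0 YXw WZw.
have rd2 : pair E rho d2 != 0.
  by apply/eqP => rd2; apply: d2_line; apply: (pair_kerI_line F0 sepE indep).
have sd3 : pair E sigma d3 != 0.
  by apply/eqP => sd3; apply: d3_line; apply: (pair_kerI_line F0 sepE indep).
have [s_neq0 r_neq0] := Zindep_neq0 indep.
split; first exact: (good_family_exists G).
by move=> v a2 a3 d; apply: good_family_coefficients.
Qed.
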